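(* If the duality gap is zero and $\lambda^{\star}$ is an optimal solution of the dual problem, then an optimal solution $x^\star$ of the primal problem can be computed by solving the following linear system with respect to $x^\star$: $\begin{bmatrix}H(\lambda^{\star}) \\ b^{\top} A\end{bmatrix} x^\star = \begin{bmatrix}A^{\top} b \\ \lambda_y^\star - b^{\top} b\end{bmatrix}$.
   Context: 3D pose graph optimization with $n$ poses $(t_i,R_i)$, first pose anchored to the identity. Let $r_i\in\mathbb{R}^9$ stack the rows of $R_i$, and let $x\in\mathbb{R}^{12(n-1)}$ stack $t_2,\dots,t_n,r_2,\dots,r_n$. The primal problem is $f^\star=\min_{x,y}\|Ax-by\|^2$ subject to $x^{\top}E_{iuv}x=1$ if $u=v$, $x^{\top}E_{iuv}x=0$ if $u\neq v$ ($u,v=1,2,3$, $i=1,\dots,n-1$), and $y^2=1$, where $A,b$ encode the anchored pose-graph cost and $E_{iuv}$ satisfies $x^{\top}E_{iuv}x=(R_i^{(u)})^{\top}R_i^{(v)}$. For multipliers $\lambda=(\{\lambda_{iuv}\},\lambda_y)$, $H(\lambda)=A^{\top}A-\sum_{i=1}^{n-1}\sum_{u,v=1}^3\lambda_{iuv}E_{iuv}$ and $M(\lambda)=\begin{bmatrix}H(\lambda)&-A^{\top}b\\-b^{\top}A&b^{\top}b-\lambda_y\end{bmatrix}$. The dual problem is the SDP $d^\star=\max_\lambda\sum_{i,u}\lambda_{iuu}+\lambda_y$ subject to $M(\lambda)\succeq 0$; the duality gap is $f^\star-d^\star$. *)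

From HB Require Import structures.
From mathcomp Require Import all_boot all_order all_algebra.
Set Implicit Arguments. Unset Strict Implicit. Unset Printing Implicit Defensive.
Import Order.TTheory GRing.Theory Num.Theory.
Local Open Scope ring_scope.

(* Number of non-anchored poses: N = n - 1.  The variable
   x : 'cV_(12 * N) stacks t_2,...,t_n (3N entries, 0-based position 3*i + k)
   followed by r_2,...,r_n, where r_i stacks the rows of R_i:
   R_i[k][c] is stored at 0-based position 3*N + 9*i + 3*k + c  (i < N, k,c < 3). *)

Definition rpos (N i k c : nat) : nat := 3 * N + 9 * i + 3 * k + c.

(* E_{iuv}: the symmetric matrix with  x^T E_{iuv} x = (R_i^(u))^T R_i^(v)
   = sum_k R_i[k][u] * R_i[k][v]  (R^(u) = u-th column of R_i). *)
Definition Emat {R : realFieldType} (N : nat) (i : 'I_N) (u v : 'I_3)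
  : 'M[R]_(12 * N) :=
  \matrix_(a, b) (2^-1 * \sum_(k < 3)
      ((((a : nat) == rpos N i k u) && ((b : nat) == rpos N i k v))%:R
     + (((a : nat) == rpos N i k v) && ((b : nat) == rpos N i k u))%:R)).

Definition mults (R : realFieldType) (N : nat) : Type :=
  ('I_N -> 'I_3 -> 'I_3 -> R) * R.

Definition Hmat {R : realFieldType} {m N : nat} (A : 'M[R]_(m, 12 * N))
  (lam : mults R N) : 'M[R]_(12 * N) :=
  A^T *m A - \sum_(i < N) \sum_(u < 3) \sum_(v < 3) lam.1 i u v *: Emat i u v.

Definition Mmat {R : realFieldType} {m N : nat} (A : 'M[R]_(m, 12 * N))
  (b : 'cV[R]_m) (lam : mults R N) : 'M[R]_(12 * N + 1) :=
  block_mx (Hmat A lam) (- (A^T *m b))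
           (- (b^T *m A)) (b^T *m b - lam.2%:M).

Definition psd {R : realFieldType} {k : nat} (M : 'M[R]_k) : Prop :=
  forall z : 'cV[R]_k, 0 <= (z^T *m M *m z) ord0 ord0.

Definition primal_cost {R : realFieldType} {m N : nat} (A : 'M[R]_(m, 12 * N))
  (b : 'cV[R]_m) (x : 'cV[R]_(12 * N)) (y : R) : R :=
  let w := A *m x - y *: b in (w^T *m w) ord0 ord0.

Definition primal_feasible {R : realFieldType} {N : nat}
  (x : 'cV[R]_(12 * N)) (y : R) : Prop :=
  (forall (i : 'I_N) (u v : 'I_3),
      (x^T *m Emat i u v *m x) ord0 ord0 = (u == v)%:R)
  /\ y ^+ 2 = 1.

Definition primal_optimal {R : realFieldType} {m N : nat}
  (A : 'M[R]_(m, 12 * N)) (b : 'cV[R]_m) (x : 'cV[R]_(12 * N)) (y : R) : Prop :=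
  primal_feasible x y /\
  forall x' y', primal_feasible x' y' -> primal_cost A b x y <= primal_cost A b x' y'.

Definition dual_obj {R : realFieldType} {N : nat} (lam : mults R N) : R :=
  \sum_(i < N) \sum_(u < 3) lam.1 i u u + lam.2.

Definition dual_feasible {R : realFieldType} {m N : nat}
  (A : 'M[R]_(m, 12 * N)) (b : 'cV[R]_m) (lam : mults R N) : Prop :=
  psd (Mmat A b lam).

Definition dual_optimal {R : realFieldType} {m N : nat}
  (A : 'M[R]_(m, 12 * N)) (b : 'cV[R]_m) (lam : mults R N) : Prop :=
  dual_feasible A b lam /\
  forall lam', dual_feasible A b lam' -> dual_obj lam' <= dual_obj lam.

(* The vector z = (x; 1) lifts a primal feasible point, and z^T M(lam) z equals the
   primal cost at x minus the dual objective at lam, since the multiplier terms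
   x^T E_iuv x evaluate to the constraint values.  A zero duality gap thus makes
   z a zero of the quadratic form of the positive semidefinite matrix M(lam), so
   M(lam) z = 0, and the two block rows of M(lam) z = 0 are the linear system. *)
From HB Require Import structures.
From mathcomp Require Import all_boot all_order all_algebra.
From mathcomp Require Import ring lra.
Import Order.TTheory GRing.Theory Num.Theory.
Local Open Scope ring_scope.

Lemma quadratic_ge0_linear_coef_eq0 {R : realFieldType} {a c : R} :
  0 <= c -> (forall t, 0 <= a * t + c * t ^+ 2) -> a = 0.
Proof.
move=> c_ge0 q_ge0.
have c1_gt0 : 0 < c + 1 by lra.
set d := (c + 1)^-1.
have d_neq0 : d != 0 by rewrite invr_eq0 gt_eqF.
have dc1 : d * (c + 1) = 1 by rewrite mulVf // gt_eqF.
(* at t = -a/(c+1) the quadratic equals -(a/(c+1))^2 *)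
have q_at : a * (- (a * d)) + c * (- (a * d)) ^+ 2 = - (a * d) ^+ 2.
  by rewrite -[a * _]mulr1 -dc1; ring.
have /eqP : (a * d) ^+ 2 = 0.
  by apply/eqP; rewrite eq_le sqr_ge0 andbT -oppr_ge0 -q_at.
by rewrite sqrf_eq0 mulf_eq0 (negbTE d_neq0) orbF => /eqP.
Qed.

Lemma mx11_tr (R : ringType) (P : 'M[R]_1) : P^T ord0 ord0 = P ord0 ord0.
Proof. by rewrite mxE. Qed.

Lemma quad_form_sym {R : comRingType} {k} (M : 'M[R]_k) (u v : 'cV[R]_k) :
  M^T = M -> (u^T *m M *m v) ord0 ord0 = (v^T *m M *m u) ord0 ord0.
Proof. by move=> M_sym; rewrite -mx11_tr !trmx_mul trmxK M_sym mulmxA. Qed.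

Lemma dotmx_eq0 (R : realFieldType) k (w : 'cV[R]_k) :
  (w^T *m w) ord0 ord0 = 0 -> w = 0.
Proof.
rewrite mxE => /eqP; rewrite psumr_eq0 => [/allP w2_eq0|i _]; last first.
  by rewrite mxE -expr2 sqr_ge0.
apply/matrixP => i j; rewrite (ord1 j) mxE.
by have := w2_eq0 i (mem_index_enum _); rewrite mxE -expr2 sqrf_eq0 => /eqP.
Qed.

Lemma psd_quad_eq0_mulmx (R : realFieldType) k (M : 'M[R]_k) (z : 'cV[R]_k) :
  M^T = M -> psd M -> (z^T *m M *m z) ord0 ord0 = 0 -> M *m z = 0.
Proof.
move=> M_sym M_psd z_null; set w := M *m z.
have cross : (z^T *m M *m w) ord0 ord0 = (w^T *m w) ord0 ord0.
  by rewrite -[z^T *m M]trmxK trmx_mul trmxK M_sym.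
have along_w t : (w^T *m w) ord0 ord0 *+ 2 * t + (w^T *m M *m w) ord0 ord0 * t ^+ 2
    = ((z + t *: w)^T *m M *m (z + t *: w)) ord0 ord0.
  rewrite [(z + _)^T]linearD /= [(t *: w)^T]linearZ /= !mulmxDl !mulmxDr.
  rewrite -!scalemxAl -!scalemxAr -!trace_mx11 !mxtraceD !mxtraceZ !trace_mx11.
  by rewrite z_null (quad_form_sym M w z M_sym) cross; ring.
apply: dotmx_eq0; apply/eqP; rewrite -[_ == 0](mulrn_eq0 _ 2); apply/eqP.
apply: (quadratic_ge0_linear_coef_eq0 (M_psd w)) => t.
by rewrite along_w; apply: M_psd.
Qed.

Lemma Emat_sym {R : realFieldType} {N} (i : 'I_N) (u v : 'I_3) :
  (@Emat R N i u v)^T = Emat i u v.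
Proof.
apply/matrixP => a c; rewrite !mxE; congr (_ * _).
by apply: eq_bigr => k _; rewrite addrC; congr (_ + _); rewrite andbC.
Qed.

Lemma Hmat_sym {R : realFieldType} {m N} (A : 'M[R]_(m, 12 * N)) lam :
  (Hmat A lam)^T = Hmat A lam.
Proof.
rewrite /Hmat linearB /= trmx_mul trmxK; congr (_ - _).
rewrite linear_sum; apply: eq_bigr => i _; rewrite linear_sum; apply: eq_bigr => u _.
by rewrite linear_sum; apply: eq_bigr => v _; rewrite linearZ /= Emat_sym.
Qed.

Lemma Mmat_sym {R : realFieldType} {m N} (A : 'M[R]_(m, 12 * N)) b lam :
  (Mmat A b lam)^T = Mmat A b lam.
Proof.
rewrite /Mmat tr_block_mx Hmat_sym !linearN /= !trmx_mul !trmxK.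
by rewrite linearB /= trmx_mul trmxK tr_scalar_mx.
Qed.

Lemma quad_form_multipliers_feasible {R : realFieldType} {N} (lam : mults R N)
    {x : 'cV[R]_(12 * N)} {y : R} :
  primal_feasible x y ->
  (x^T *m (\sum_(i < N) \sum_(u < 3) \sum_(v < 3) lam.1 i u v *: Emat i u v) *m x)
    ord0 ord0 = \sum_(i < N) \sum_(u < 3) lam.1 i u u.
Proof.
move=> [x_orth _].
rewrite mulmx_sumr mulmx_suml summxE; apply: eq_bigr => i _.
rewrite mulmx_sumr mulmx_suml summxE; apply: eq_bigr => u _.
rewrite mulmx_sumr mulmx_suml summxE (bigD1 u) //= big1 => [|v /negbTE vu].
  by rewrite -scalemxAr -scalemxAl mxE x_orth eqxx mulr1 addr0.
by rewrite -scalemxAr -scalemxAl mxE x_orth eq_sym vu mulr0.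
Qed.

Lemma Mmat_mul_lift {R : realFieldType} {m N} (A : 'M[R]_(m, 12 * N)) b lam x :
  Mmat A b lam *m col_mx x 1%:M
  = col_mx (Hmat A lam *m x - A^T *m b) (b^T *m b - lam.2%:M - b^T *m A *m x).
Proof. by rewrite mul_block_col !mulmx1 !mulNmx [- _ + _]addrC. Qed.

Lemma quad_Mmat_lift {R : realFieldType} {m N} (A : 'M[R]_(m, 12 * N)) b lam
    {x : 'cV[R]_(12 * N)} {y : R} :
  primal_feasible x y ->
  ((col_mx x 1%:M)^T *m Mmat A b lam *m col_mx x 1%:M) ord0 ord0
  = primal_cost A b x 1 - dual_obj lam.
Proof.
move=> x_feas.
have cross : (x^T *m A^T *m b) ord0 ord0 = (b^T *m A *m x) ord0 ord0.
  by rewrite -mx11_tr !trmx_mul !trmxK mulmxA.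
rewrite -mulmxA Mmat_mul_lift tr_col_mx trmx1 mul_row_col mul1mx /Hmat.
rewrite /primal_cost /dual_obj scale1r [(A *m x - b)^T]linearB /= trmx_mul.
rewrite !(mulmxBl, mulmxBr, mulmxDl, mulmxDr, mulNmx, mulmxN) !mulmxA.
rewrite -!trace_mx11 !(raddfD, raddfN, raddfB) /= !trace_mx11.
rewrite (quad_form_multipliers_feasible lam x_feas) cross [(lam.2)%:M _ _]mxE mulr1n.
by ring.
Qed.

Theorem proposition4 (R : realFieldType) (n m : nat)
  (A : 'M[R]_(m, 12 * n.-1)) (b : 'cV[R]_m)
  (lam : mults R n.-1) (x : 'cV[R]_(12 * n.-1)) :
  dual_optimal A b lam ->
  primal_optimal A b x 1 ->
  (* zero duality gap: f* = d* *)
  primal_cost A b x 1 = dual_obj lam ->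
  col_mx (Hmat A lam) (b^T *m A) *m x
    = col_mx (A^T *m b) (b^T *m b - lam.2%:M).
Proof.
move=> [lam_feas _] [x_feas _] zero_gap.
have lift_null : Mmat A b lam *m col_mx x 1%:M = 0.
  apply: psd_quad_eq0_mulmx (Mmat_sym A b lam) lam_feas _.
  by rewrite (quad_Mmat_lift A b lam x_feas) zero_gap subrr.
move/eqP: lift_null; rewrite Mmat_mul_lift col_mx_eq0 !subr_eq0.
by move=> /andP[/eqP Hx /eqP bAx]; rewrite mul_col_mx Hx bAx.
Qed.
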